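(* Let $\mathcal{G}$ be an $N$-player game with finite action spaces $\mathcal{A}^1,\dots,\mathcal{A}^N$ and payoffs $u^i$; let $\varepsilon\ge0$, $s\ge1$, and metrics $d^{-i}$ on $\mathcal{A}^{-i}$ define optimal transport ambiguity sets. For a profile of mixed strategies $(\bar p^1,\dots,\bar p^N)$, the following are equivalent: (1) $(\bar p^1,\dots,\bar p^N)$ is a strategically robust equilibrium of $\mathcal{G}$ with robustness level $\varepsilon$; (2) for every $i\in\{1,\dots,N\}$ there exist $\lambda^i\in\mathbb{R}$, $\xi^i(a^{-i})\in\mathbb{R}$ ($a^{-i}\in\mathcal{A}^{-i}$), $\tau^i\in\mathbb{R}$, $\omega^i(a^i)\in\mathbb{R}$ ($a^i\in\mathcal{A}^i$), $\kappa^i\in\mathbb{R}$, and $\eta^i(a^{-i},\hat a^{-i})\in\mathbb{R}$ ($a^{-i},\hat a^{-i}\in\mathcal{A}^{-i}$) such that $$\omega^i(a^i)+\kappa^i+\sum_{a^{-i}\in\mathcal{A}^{-i}}\sum_{\hat a^{-i}\in\mathcal{A}^{-i}}\eta^i(a^{-i},\hat a^{-i})\,u^i(a^i,\hat a^{-i})=0\quad\forall a^i\in\mathcal{A}^i,$$ $$-\varepsilon^s+\tau^i+\sum_{a^{-i}}\sum_{\hat a^{-i}}\eta^i(a^{-i},\hat a^{-i})\,d^{-i}(a^{-i},\hat a^{-i})^s=0,$$ $$\prod_{j\ne i}\bar p^j(a^j)-\sum_{\hat a^{-i}\in\mathcal{A}^{-i}}\eta^i(a^{-i},\hat a^{-i})=0\quad\forall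 a^{-i}=(a^j)_{j\ne i}\in\mathcal{A}^{-i},$$ and the complementarity conditions $$0\le\tau^i\perp\lambda^i\ge0,\qquad 0\le\omega^i(a^i)\perp\bar p^i(a^i)\ge0\quad\forall a^i\in\mathcal{A}^i,$$ $$0\le\eta^i(a^{-i},\hat a^{-i})\perp\Big(-\xi^i(a^{-i})+\sum_{a^i\in\mathcal{A}^i}u^i(a^i,\hat a^{-i})\bar p^i(a^i)+\lambda^i d^{-i}(a^{-i},\hat a^{-i})^s\Big)\ge0\quad\forall a^{-i},\hat a^{-i}\in\mathcal{A}^{-i}.$$
   Context: $\mathcal{A}^{-i}:=\prod_{j\ne i}\mathcal{A}^j$. Mixed strategies $\bar p^i$ are probability vectors on $\mathcal{A}^i$; $\sigma_{p^{-i}}$ is the product distribution of $(p^j)_{j\ne i}$ on $\mathcal{A}^{-i}$. For a distribution $q$ on $\mathcal{A}^{-i}$, $U^i(p^i,q)=\sum_{a^i,a^{-i}}p^i(a^i)q(a^{-i})u^i(a^i,a^{-i})$. Ambiguity set: $\mathcal{S}^i_\varepsilon(p^{-i})=\{q:W_s(\sigma_{p^{-i}},q)\le\varepsilon\}$ with $W_s(\mu,\nu)=\left(\min_{\gamma\in\Gamma(\mu,\nu)}\sum_{x,y}d^{-i}(x,y)^s\gamma(x,y)\right)^{1/s}$ over couplings $\Gamma(\mu,\nu)$. A profile $(\bar p^1,\dots,\bar p^N)$ is a strategically robust equilibrium with robustness level $\varepsilon$ if for every $i$, $\bar p^i\in\arg\max_{p^i}\min_{q\in\mathcal{S}^i_\varepsilon(\bar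 p^{-i})}U^i(p^i,q)$. The notation $0\le x\perp y\ge0$ means $x\ge0$, $y\ge0$ and $xy=0$. *)

From HB Require Import structures.
From mathcomp Require Import all_boot all_order all_algebra.
From mathcomp Require Import all_classical all_reals all_analysis.
Set Implicit Arguments. Unset Strict Implicit. Unset Printing Implicit Defensive.
Import Order.TTheory GRing.Theory Num.Theory.
Local Open Scope classical_set_scope.
Local Open Scope ring_scope.

Section Game.
Context {R : realType}.

Definition others (N : nat) (i : 'I_N) := {j : 'I_N | j != i}.

Definition profm (N : nat) (A : 'I_N -> finType) (i : 'I_N) : finType :=
  {dffun forall j : others i, A (sval j)}.

Definition is_prob (T : finType) (p : T -> R) : Prop :=
  (forall x, 0 <= p x) /\ \sum_(x : T) p x = 1.

Definition is_metric (T : finType) (d : T -> T -> R) : Prop :=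
  [/\ forall x y, 0 <= d x y,
      forall x y, d x y = 0 <-> x = y,
      forall x y, d x y = d y x
    & forall x y z, d x z <= d x y + d y z].

Definition prod_dist (N : nat) (A : 'I_N -> finType) (p : forall j, A j -> R)
  (i : 'I_N) (a : profm A i) : R :=
  \prod_(j : others i) p (sval j) (a j).

Definition Upay (S T : finType) (u : S -> T -> R) (p : S -> R) (q : T -> R) : R :=
  \sum_(a : S) \sum_(b : T) p a * q b * u a b.

Definition coupling (T : finType) (mu nu : T -> R) (g : T -> T -> R) : Prop :=
  [/\ forall x y, 0 <= g x y,
      forall x, \sum_(y : T) g x y = mu x
    & forall y, \sum_(x : T) g x y = nu y].

Definition Wass (T : finType) (d : T -> T -> R) (s : R) (mu nu : T -> R) : R :=
  (inf [set c | exists g, coupling mu nu g /\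
                   c = \sum_(x : T) \sum_(y : T) (d x y) `^ s * g x y]) `^ (s^-1).

Definition ambiguity (T : finType) (d : T -> T -> R) (s eps : R) (mu : T -> R)
  : set (T -> R) :=
  [set q | is_prob q /\ Wass d s mu q <= eps].

Definition robust_value (S T : finType) (u : S -> T -> R) (d : T -> T -> R)
  (s eps : R) (p : S -> R) (mu : T -> R) : R :=
  inf [set Upay u p q | q in ambiguity d s eps mu].

Definition SRE (N : nat) (A : 'I_N -> finType)
  (u : forall i, A i -> profm A i -> R) (d : forall i, profm A i -> profm A i -> R)
  (s eps : R) (pbar : forall i, A i -> R) : Prop :=
  forall i : 'I_N, is_prob (pbar i) /\
    forall p : A i -> R, is_prob p ->
      robust_value (u i) (d i) s eps p (@prod_dist N A pbar i)
      <= robust_value (u i) (d i) s eps (pbar i) (@prod_dist N A pbar i).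

Definition perp (x y : R) : Prop := [/\ 0 <= x, 0 <= y & x * y = 0].

End Game.
Arguments prod_dist {R N A} p i a.

From HB Require Import structures.
From mathcomp Require Import all_boot all_order all_algebra.
From mathcomp Require Import all_classical all_reals all_analysis.
From mathcomp Require Import ring lra.
Import Order.TTheory GRing.Theory Num.Theory.
Local Open Scope classical_set_scope.
Local Open Scope ring_scope.

(* Fix player i and let sigma be the product of the opponents' strategies.
   The inner problem min { U(p, q) : W_s(sigma, q) <= eps } is a linear
   program over transport plans g out of sigma with budget
   sum g d^s <= eps^s; its dual variables are (xi, lam).  Both sides of the
   equivalence amount to a saddle certificate at some level c0: a plan g
   against whose target marginal every pure action earns at most c0, and a
   dual feasible (xi, lam) for pbar of value at least c0.  Weak duality turns
   a certificate into optimality of pbar.  Conversely, for c0 the robust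
   value of pbar, Farkas' lemma (proved by Fourier-Motzkin elimination)
   yields the plan (a minimax argument) and the dual pair (strong duality of
   the transport program).  The KKT system is a certificate in disguise: the
   duality gap c0 - dual_value splits into a sum of the nonnegative products
   which complementary slackness sets to zero. *)

Section SumLemmas.
Variable R : pzSemiRingType.

Lemma sum_delta_l (T : finType) (t : T) (F : T -> R) :
  \sum_x (x == t)%:R * F x = F t.
Proof.
by rewrite (bigD1 t) //= eqxx mul1r big1 ?addr0 // => x /negbTE->; rewrite mul0r.
Qed.

Lemma sum_delta_r (T : finType) (t : T) (F : T -> R) :
  \sum_x F x * (t == x)%:R = F t.
Proof.
rewrite (bigD1 t) //= eqxx mulr1 big1 ?addr0 // => x.
by rewrite eq_sym => /negbTE->; rewrite mulr0.
Qed.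

Lemma sum_pair (T U : finType) (F : T * U -> R) :
  \sum_v F v = \sum_x \sum_y F (x, y).
Proof. by rewrite pair_big; apply: eq_bigr => -[]. Qed.

Lemma sum_unit (F : unit -> R) : \sum_j F j = F tt.
Proof. by rewrite (big_pred1 tt) // => -[]. Qed.

End SumLemmas.

Lemma bigA_distr_dffun (R : comPzSemiRingType) (I : finType) (T_ : I -> finType)
    (F : forall i, T_ i -> R) :
  \prod_i \sum_(x : T_ i) F i x =
  \sum_(t : {dffun forall i : I, T_ i}) \prod_i F i (t i).
Proof.
pose P_ i := [ffun x : T_ i => F i x].
rewrite [RHS](reindex (@dffun_of_fprod I T_)); last exact/onW_bij/dffun_of_fprod_bij.
transitivity (\sum_(t : fprod T_) \prod_(i in I) P_ i (t i)); last first.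
  by apply: eq_bigr => t _; apply: eq_bigr => i _; rewrite /P_ !ffunE.
rewrite big_fprod /=.
rewrite -(bigA_distr_big_dep (tagged_with T_) (fun i j => untag 0 (P_ i) j)).
apply: eq_bigr => i _; rewrite (big_tag (fun i x => F i x) i).
by apply: eq_bigr => j _; rewrite /P_ /untag; case: eqP => // e; rewrite ffunE.
Qed.

Lemma exists_between (R : realDomainType) (I : finType) (P Q : pred I)
    (L U : I -> R) :
  (forall q p, Q q -> P p -> L q <= U p) ->
  exists2 t, (forall q, Q q -> L q <= t) & (forall p, P p -> t <= U p).
Proof.
move=> LU; pose M := \big[Num.max/0]_(q | Q q) L q.
exists (\big[Num.min/M]_(p | P p) U p) => [q Qq|p Pp]; last first.
  by rewrite (bigD1 p) //= ge_min lexx.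
elim/big_ind: _ => [|x y Lx Ly|p Pp]; last exact: LU.
- by rewrite /M (bigD1 q) //= le_max lexx.
- by rewrite le_min Lx Ly.
Qed.

Lemma powRV_le (R : realType) (r x y : R) : 0 < r -> 0 <= x -> 0 <= y ->
  (x `^ r^-1 <= y) = (x <= y `^ r).
Proof.
move=> r_gt0 x_ge0 y_ge0; have r_neq0 : r != 0 by rewrite gt_eqF.
apply/idP/idP => le.
- rewrite -[x](powRr1 x_ge0) -(mulVf r_neq0) powRrM.
  by apply: ge0_ler_powR => //; rewrite ?nnegrE ?powR_ge0 // ltW.
- rewrite -[y](powRr1 y_ge0) -(mulfV r_neq0) powRrM.
  by apply: ge0_ler_powR => //; rewrite ?nnegrE ?powR_ge0 // invr_ge0 ltW.
Qed.

Lemma le_mul_inf (R : realType) (C : set R) (x lam : R) :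
  C !=set0 -> 0 <= lam -> (forall c, C c -> x <= lam * c) -> x <= lam * inf C.
Proof.
move=> [c Cc] lam_ge0 le_x.
have [lam0|lam_neq0] := eqVneq lam 0.
  by move: (le_x _ Cc); rewrite lam0 !mul0r.
have lam_gt0 : 0 < lam by rewrite lt_def lam_neq0.
rewrite mulrC -ler_pdivrMr //; apply: lb_le_inf; first by exists c.
by move=> c' Cc'; rewrite ler_pdivrMr // mulrC le_x.
Qed.

Section FourierMotzkin.
Context {R : realFieldType} {K : finType} (a : K -> nat -> R) (n : nat).

(* The rows of the system with [x_n] eliminated: every row whose coefficient
   on [x_n] vanishes, and, for every pair of rows with coefficients of
   opposite signs on [x_n], the positive combination cancelling it. *)
Definition fm_weight (k' : K + K * K) (k : K) : R :=
  match k' with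
  | inl l => if a l n == 0 then (k == l)%:R else 0
  | inr (p, q) => if (0 < a p n) && (a q n < 0)
      then (k == p)%:R * - a q n + (k == q)%:R * a p n else 0
  end.

Definition fm_comb (f : K -> R) (k' : K + K * K) : R :=
  \sum_k fm_weight k' k * f k.

Lemma fm_weight_ge0 k' k : 0 <= fm_weight k' k.
Proof.
case: k' => [l|[p q]] /=; first by case: ifP.
case: ifP => // /andP[ap_gt0 aq_lt0].
by rewrite addr_ge0 // mulr_ge0 ?ler0n ?oppr_ge0 ?ltW.
Qed.

Lemma fm_combE f k' : fm_comb f k' =
  match k' with
  | inl l => if a l n == 0 then f l else 0
  | inr (p, q) => if (0 < a p n) && (a q n < 0)
      then - a q n * f p + a p n * f q else 0
  end.
Proof.
rewrite /fm_comb; case: k' => [l|[p q]] /=; case: ifP => _;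
  try by rewrite big1 // => k _; rewrite mul0r.
- by rewrite sum_delta_l.
- under eq_bigr => k _ do rewrite mulrDl -!mulrA.
  by rewrite big_split /= !sum_delta_l.
Qed.

Lemma fm_comb_elim k' : fm_comb (a^~ n) k' = 0.
Proof.
rewrite fm_combE; case: k' => [l|[p q]]; case: ifP => //; first by move/eqP.
by rewrite mulNr mulrC addNr.
Qed.

Lemma fm_comb_sum (x : nat -> R) k' :
  fm_comb (fun k => \sum_(j < n) a k j * x j) k' =
  \sum_(j < n) fm_comb (a^~ j) k' * x j.
Proof.
rewrite /fm_comb; under eq_bigr => k _ do rewrite mulr_sumr.
rewrite exchange_big /=; apply: eq_bigr => j _; rewrite mulr_suml.
by apply: eq_bigr => k _; rewrite mulrA.
Qed.

Lemma fm_lift (b : K -> R) :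
  (exists x : nat -> R,
     forall k', \sum_(j < n) fm_comb (a^~ j) k' * x j <= fm_comb b k') ->
  exists x : nat -> R, forall k, \sum_(j < n.+1) a k j * x j <= b k.
Proof.
move=> [x' feas]; pose l k := \sum_(j < n) a k j * x' j.
have {}feas k' : fm_comb l k' <= fm_comb b k' by rewrite /l fm_comb_sum.
pose U p := (b p - l p) / a p n.
pose L q := (b q - l q) / a q n.
(* Row [k] bounds [x_n] from below by [L k] when [a k n < 0] and from above by
   [U k] when [0 < a k n]; the combined rows say that these bounds are
   compatible, and the rows with [a k n = 0] do not involve [x_n]. *)
have [t Lt tU] : exists2 t, (forall q, a q n < 0 -> L q <= t) &
                            (forall p, 0 < a p n -> t <= U p).
  apply: exists_between => q p aq_lt0 ap_gt0.
  have := feas (inr (p, q)); rewrite !fm_combE ap_gt0 aq_lt0 /= => comb_le.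
  rewrite /L /U ler_ndivrMr // mulrAC ler_pdivrMr //; lra.
exists (fun j => if j == n then t else x' j) => k.
rewrite big_ord_recr /= eqxx (_ : \sum_(j < n) _ = l k); last first.
  by apply: eq_bigr => j _; rewrite (ltn_eqF (ltn_ord j)).
case: (ltgtP (a k n) 0) => akn.
- by have := Lt k akn; rewrite /L ler_ndivrMr //; lra.
- by have := tU k akn; rewrite /U ler_pdivlMr //; lra.
- by have := feas (inl k); rewrite !fm_combE akn eqxx mul0r; lra.
Qed.

Lemma fm_pullback (w : K + K * K -> R) (f : K -> R) :
  \sum_k (\sum_k' w k' * fm_weight k' k) * f k = \sum_k' w k' * fm_comb f k'.
Proof.
under eq_bigr => k _ do rewrite mulr_suml.
rewrite exchange_big /=; apply: eq_bigr => k' _; rewrite /fm_comb mulr_sumr.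
by apply: eq_bigr => k _; rewrite mulrA.
Qed.

End FourierMotzkin.

Lemma fourier_motzkin (R : realFieldType) (n : nat) :
  forall (K : finType) (a : K -> nat -> R) (b : K -> R),
  ~ (exists x : nat -> R, forall k, \sum_(j < n) a k j * x j <= b k) ->
  exists2 w : K -> R, (forall k, 0 <= w k) &
    (forall j, (j < n)%N -> \sum_k w k * a k j = 0) /\ \sum_k w k * b k < 0.
Proof.
elim: n => [|n IH] K a b infeasible.
  have [k bk_lt0] : exists k, b k < 0.
    apply: contra_notP infeasible => b_ge0; exists (fun=> 0) => k.
    by rewrite big_ord0 leNgt; apply/negP => bk_lt0; apply: b_ge0; exists k.
  by exists (fun l => (l == k)%:R) => [l|]; rewrite ?ler0n ?sum_delta_l.
have [w w_ge0 [w_a w_b]] := IH _ (fun k' j => fm_comb a n (a^~ j) k')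
  (fm_comb a n b) (fun feas => infeasible (fm_lift a n b feas)).
exists (fun k => \sum_k' w k' * fm_weight a n k' k) => [k|].
  by apply: sumr_ge0 => k' _; rewrite mulr_ge0 ?fm_weight_ge0.
split; last by rewrite fm_pullback.
move=> j; rewrite (fm_pullback _ _ _ (a^~ j)) ltnS leq_eqVlt => /orP[/eqP->|/w_a //].
by rewrite big1 // => k' _; rewrite fm_comb_elim mulr0.
Qed.

Theorem farkas {R : realFieldType} {V K : finType} (c : K -> V -> R) (b : K -> R) :
  ~ (exists x : V -> R, forall k, \sum_v c k v * x v <= b k) ->
  exists2 w : K -> R, (forall k, 0 <= w k) &
    (forall v, \sum_k w k * c k v = 0) /\ \sum_k w k * b k < 0.
Proof.
move=> infeasible.
pose a k j := oapp (c k \o enum_val) 0 (insub j : option 'I_#|V|).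
have aE k (o : 'I_#|V|) : a k o = c k (enum_val o) by rewrite /a valK.
have sumE k (x : nat -> R) :
    \sum_(j < #|V|) a k j * x j = \sum_v c k v * x (enum_rank v).
  rewrite (reindex (@enum_rank V)); last exact/onW_bij/enum_rank_bij.
  by apply: eq_bigr => v _; rewrite aE enum_rankK.
have [|w w_ge0 [w_a w_b]] := @fourier_motzkin R #|V| _ a b.
  move=> [x feas]; apply: infeasible.
  by exists (fun v => x (enum_rank v)) => k; rewrite -sumE.
exists w => //; split=> // v.
have := w_a _ (ltn_ord (enum_rank v)).
by under eq_bigr => k _ do rewrite aE enum_rankK.
Qed.

Section TransportPlans.
Context {R : realType} {S P : finType} (u : S -> P -> R).
Variables (D : P -> P -> R) (E : R) (sig : P -> R).

Definition payoff (p : S -> R) (ah : P) : R := \sum_ai u ai ah * p ai.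

Definition is_plan (g : P -> P -> R) : Prop :=
  (forall a ah, 0 <= g a ah) /\ forall a, \sum_ah g a ah = sig a.

Definition target (g : P -> P -> R) (ah : P) : R := \sum_a g a ah.

Definition plan_cost (g : P -> P -> R) : R := \sum_a \sum_ah g a ah * D a ah.

Definition plan_value (V : P -> R) (g : P -> P -> R) : R :=
  \sum_a \sum_ah g a ah * V ah.

Definition dual_feasible (V xi : P -> R) (lam : R) : Prop :=
  0 <= lam /\ forall a ah, xi a - lam * D a ah <= V ah.

Definition dual_value (xi : P -> R) (lam : R) : R :=
  \sum_a sig a * xi a - lam * E.

Lemma plan_value_payoff p g :
  plan_value (payoff p) g = \sum_ai p ai * plan_value (u ai) g.
Proof.
rewrite /plan_value /payoff; under [RHS]eq_bigr => ai _ do rewrite mulr_sumr.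
rewrite [RHS]exchange_big; apply: eq_bigr => a _.
under [RHS]eq_bigr => ai _ do rewrite mulr_sumr.
rewrite [RHS]exchange_big; apply: eq_bigr => ah _.
by rewrite mulr_sumr; apply: eq_bigr => ai _; ring.
Qed.

Lemma plan_weak_duality {V g xi lam} : is_plan g -> dual_feasible V xi lam ->
  \sum_a sig a * xi a - lam * plan_cost g <= plan_value V g.
Proof.
move=> [g_ge0 g_rows] [_ xi_le].
have -> : \sum_a sig a * xi a - lam * plan_cost g =
          \sum_a \sum_ah g a ah * (xi a - lam * D a ah).
  rewrite /plan_cost mulr_sumr -sumrB; apply: eq_bigr => a _.
  rewrite -g_rows mulr_suml mulr_sumr -sumrB; apply: eq_bigr => ah _; ring.
by apply: ler_sum => a _; apply: ler_sum => ah _; apply: ler_wpM2l.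
Qed.

(* The dual program as a system [\sum_v dual_lp k v * x v <= dual_lp_rhs V c k]
   in the variables [x (inl a) = xi a] and [x (inr tt) = lam]; its rows say
   dual feasibility, [lam >= 0] and [c <= dual_value xi lam]. *)
Definition dual_lp (k : P * P + bool) (v : P + unit) : R :=
  match k, v with
  | inl (a, _), inl a' => (a' == a)%:R
  | inl (a, ah), inr _ => - D a ah
  | inr true, inl _ => 0
  | inr true, inr _ => -1
  | inr false, inl a' => - sig a'
  | inr false, inr _ => E
  end.

Definition dual_lp_rhs (V : P -> R) (c : R) (k : P * P + bool) : R :=
  match k with inl (_, ah) => V ah | inr true => 0 | inr false => - c end.

Lemma dual_lp_feasible {V c x} :
  (forall k, \sum_v dual_lp k v * x v <= dual_lp_rhs V c k) ->
  let xi a := x (inl a) in let lam := x (inr tt) in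
  dual_feasible V xi lam /\ c <= dual_value xi lam.
Proof.
move=> feas xi lam.
have {}feas k : \sum_a dual_lp k (inl a) * xi a + dual_lp k (inr tt) * lam
                <= dual_lp_rhs V c k.
  by have := feas k; rewrite big_sumType sum_unit.
split; first split.
- have := feas (inr true); rewrite /= big1 ?add0r => [|a _]; last exact: mul0r.
  by lra.
- by move=> a ah; have := feas (inl (a, ah)); rewrite /= sum_delta_l; lra.
- have := feas (inr false); rewrite /dual_value /=.
  under eq_bigr => a _ do rewrite mulNr.
  by rewrite sumrN; lra.
Qed.

Lemma dual_lp_multipliers {V c w} : (forall k, 0 <= w k) ->
  (forall v, \sum_k w k * dual_lp k v = 0) -> \sum_k w k * dual_lp_rhs V c k < 0 ->
  exists g z, [/\ forall a ah, 0 <= g a ah, 0 <= z,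
    forall a, \sum_ah g a ah = z * sig a, plan_cost g <= z * E
    & plan_value V g < z * c].
Proof.
move=> w_ge0 w_lp w_rhs; pose g a ah := w (inl (a, ah)); pose z := w (inr false).
have {}w_lp v : \sum_a \sum_ah g a ah * dual_lp (inl (a, ah)) v +
    (w (inr true) * dual_lp (inr true) v + z * dual_lp (inr false) v) = 0.
  by have := w_lp v; rewrite big_sumType sum_pair big_bool.
exists g, z; split=> [a ah||a||]; rewrite ?w_ge0 //.
- have := w_lp (inl a) => /=.
  under eq_bigr => a' _ do rewrite -mulr_suml.
  rewrite sum_delta_r mulr0 add0r mulrN => /eqP; rewrite addr_eq0 opprK => /eqP->.
  by rewrite mulrC.
- have := w_lp (inr tt) => /=.
  under eq_bigr => a _ do under eq_bigr => ah _ do rewrite mulrN.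
  rewrite /plan_cost; under eq_bigr => a _ do rewrite sumrN.
  by rewrite sumrN mulrC; have := w_ge0 (inr true); lra.
- move: w_rhs; rewrite big_sumType sum_pair big_bool /= /plan_value.
  by rewrite mulr0 add0r mulrN mulrC; lra.
Qed.

Lemma transport_strong_duality V c :
  (forall g, is_plan g -> plan_cost g <= E -> c <= plan_value V g) ->
  exists xi lam, dual_feasible V xi lam /\ c <= dual_value xi lam.
Proof.
move=> plan_ge; apply: contrapT => no_dual.
have [|w w_ge0 [w_lp w_rhs]] := farkas dual_lp (dual_lp_rhs V c).
  by move=> [x /dual_lp_feasible dual]; apply: no_dual; do 2!eexists; exact: dual.
have [g [z [g_ge0 z_ge0 g_rows g_cost g_val]]] :=
  dual_lp_multipliers w_ge0 w_lp w_rhs.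
have [z0|z_neq0] := eqVneq z 0.
  suff g0 a ah : g a ah = 0.
    move: g_val; rewrite z0 mul0r /plan_value big1 ?ltxx // => a _.
    by rewrite big1 // => ah _; rewrite g0 mul0r.
  by apply: (psumr_eq0P (P := xpredT)) => //; rewrite g_rows z0 mul0r.
have z_gt0 : 0 < z by rewrite lt_def z_neq0.
have scale F :
    \sum_a \sum_ah g a ah / z * F a ah = (\sum_a \sum_ah g a ah * F a ah) / z.
  rewrite mulr_suml; apply: eq_bigr => a _; rewrite mulr_suml.
  by apply: eq_bigr => ah _; rewrite mulrAC.
have g'_plan : is_plan (fun a ah => g a ah / z).
  by split=> [a ah|a]; rewrite ?divr_ge0 // -mulr_suml g_rows mulrC mulKf.
have := plan_ge _ g'_plan; rewrite /plan_cost /plan_value !scale.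
rewrite ler_pdivrMr // ler_pdivlMr //.
by move: g_cost g_val; rewrite /plan_cost /plan_value; lra.
Qed.

(* The plan program as a system [\sum_v plan_lp k v * x v <= plan_lp_rhs c0 k]
   in the variables [x (a, ah) = g a ah]; its rows say [g >= 0], row sums
   [<= sig] and [>= sig], [plan_cost g <= E] and [plan_value (u ai) g <= c0]. *)
Definition plan_lp (k : (P * P + (P + P)) + (unit + S)) (v : P * P) : R :=
  match k with
  | inl (inl g) => - (v == g)%:R
  | inl (inr (inl a)) => (v.1 == a)%:R
  | inl (inr (inr a)) => - (v.1 == a)%:R
  | inr (inl _) => D v.1 v.2
  | inr (inr ai) => u ai v.2
  end.

Definition plan_lp_rhs (c0 : R) (k : (P * P + (P + P)) + (unit + S)) : R :=
  match k with
  | inl (inl _) => 0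
  | inl (inr (inl a)) => sig a
  | inl (inr (inr a)) => - sig a
  | inr (inl _) => E
  | inr (inr _) => c0
  end.

Lemma plan_lp_feasible {c0 x} :
  (forall k, \sum_v plan_lp k v * x v <= plan_lp_rhs c0 k) ->
  let g a ah := x (a, ah) in
  [/\ is_plan g, plan_cost g <= E & forall ai, plan_value (u ai) g <= c0].
Proof.
move=> feas g.
have row a : \sum_v (v.1 == a)%:R * x v = \sum_ah g a ah.
  rewrite sum_pair /=; under eq_bigr => a' _ do rewrite -mulr_sumr.
  exact: sum_delta_l.
have pair_sum (F : P -> P -> R) :
    \sum_v F v.1 v.2 * x v = \sum_a \sum_ah g a ah * F a ah.
  by rewrite sum_pair; apply: eq_bigr => a _; apply: eq_bigr => ah _; rewrite mulrC.
split; first split.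
- move=> a ah; have := feas (inl (inl (a, ah))) => /=.
  by under eq_bigr => v _ do rewrite mulNr; rewrite sumrN sum_delta_l oppr_le0.
- move=> a; have := feas (inl (inr (inl a))); have := feas (inl (inr (inr a))) => /=.
  under eq_bigr => v _ do rewrite mulNr.
  by rewrite sumrN !row; lra.
- by have := feas (inr (inl tt)); rewrite /= (pair_sum D).
- by move=> ai; have := feas (inr (inr ai)); rewrite /= (pair_sum (fun _ => u ai)).
Qed.

Lemma plan_lp_multipliers {c0 w} : (forall k, 0 <= w k) ->
  (forall v, \sum_k w k * plan_lp k v = 0) -> \sum_k w k * plan_lp_rhs c0 k < 0 ->
  exists y xi lam, [/\ forall ai, 0 <= y ai, dual_feasible (payoff y) xi lam
                     & c0 * \sum_ai y ai < dual_value xi lam].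
Proof.
move=> w_ge0 w_lp w_rhs.
pose y ai := w (inr (inr ai)).
pose r a := w (inl (inr (inl a))) - w (inl (inr (inr a))).
have {}w_lp a ah :
    r a + w (inr (inl tt)) * D a ah + payoff y ah = w (inl (inl (a, ah))).
  have := w_lp (a, ah); rewrite !big_sumType sum_unit /=.
  under eq_bigr => g _ do rewrite mulrN.
  under [X in _ + (_ + X) + _]eq_bigr => a' _ do rewrite mulrN.
  rewrite !sumrN !sum_delta_r /payoff /r.
  under [X in _ + (_ + X)]eq_bigr => ai _ do rewrite mulrC.
  lra.
exists y, (fun a => - r a), (w (inr (inl tt))); split => //.
- by move=> ai; exact: w_ge0.
- split=> [|a ah]; first exact: w_ge0.
  by have := w_lp a ah; have := w_ge0 (inl (inl (a, ah))); lra.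
- move: w_rhs; rewrite !big_sumType sum_unit /= /dual_value.
  rewrite big1 => [|g _]; last by rewrite mulr0.
  have -> : \sum_ai w (inr (inr ai)) * c0 = c0 * \sum_ai y ai.
    by rewrite mulr_sumr; apply: eq_bigr => ai _; rewrite mulrC.
  have -> : \sum_a sig a * - r a = - (\sum_a w (inl (inr (inl a))) * sig a +
                                     \sum_a w (inl (inr (inr a))) * - sig a).
    by rewrite -big_split -sumrN; apply: eq_bigr => a _ /=; rewrite /r; ring.
  lra.
Qed.

Lemma plan_or_dual c0 : (exists2 g0, is_plan g0 & plan_cost g0 <= E) ->
  (exists g,
     [/\ is_plan g, plan_cost g <= E & forall ai, plan_value (u ai) g <= c0]) \/
  (exists p xi lam, [/\ is_prob p, dual_feasible (payoff p) xi lam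
                       & c0 < dual_value xi lam]).
Proof.
move=> [g0 g0_plan g0_cost].
have [|no_plan] := pselect
  (exists g, [/\ is_plan g, plan_cost g <= E & forall ai, plan_value (u ai) g <= c0]).
  by left.
have [|w w_ge0 [w_lp w_rhs]] := farkas plan_lp (plan_lp_rhs c0).
  by move=> [x /plan_lp_feasible plan]; apply: no_plan; eexists; exact: plan.
have [y [xi [lam [y_ge0 y_dual y_val]]]] := plan_lp_multipliers w_ge0 w_lp w_rhs.
right; have [Y0|Y_neq0] := eqVneq (\sum_ai y ai) 0.
  (* Then the multipliers show that no plan meets the budget, but [g0] does. *)
  exfalso; have y0 ai : y ai = 0 by apply: (psumr_eq0P (P := xpredT)).
  have val0 : plan_value (payoff y) g0 = 0.
    rewrite /plan_value big1 // => a _; rewrite big1 // => ah _.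
    by rewrite /payoff big1 ?mulr0 // => ai _; rewrite y0 mulr0.
  have := plan_weak_duality g0_plan y_dual; rewrite val0.
  have := ler_wpM2l y_dual.1 g0_cost.
  by move: y_val; rewrite Y0 mulr0 /dual_value; lra.
pose Y := \sum_ai y ai.
have Y_gt0 : 0 < Y by rewrite lt_def Y_neq0 sumr_ge0.
exists (fun ai => y ai / Y), (fun a => xi a / Y), (lam / Y); split.
- split=> [ai|]; first by rewrite divr_ge0 ?y_ge0 ?ltW.
  by rewrite -mulr_suml divff // gt_eqF.
- split=> [|a ah]; first by rewrite divr_ge0 ?y_dual.1 ?ltW.
  have -> : payoff (fun ai => y ai / Y) ah = payoff y ah / Y.
    by rewrite /payoff mulr_suml; apply: eq_bigr => ai _; rewrite mulrA.
  by rewrite mulrAC -mulrBl ler_pM2r ?invr_gt0 //; exact: y_dual.2.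
- have -> : dual_value (fun a => xi a / Y) (lam / Y) = dual_value xi lam / Y.
    rewrite /dual_value mulrBl mulr_suml mulrAC; congr (_ - _).
    by apply: eq_bigr => a _; rewrite mulrA.
  by rewrite ltr_pdivlMr.
Qed.

Section SaddleCertificate.
Variable pbar : S -> R.

Definition robust_kkt : Prop :=
  exists (lam : R) (xi : P -> R) (tau : R) (om : S -> R) (kap : R)
         (eta : P -> P -> R),
    (forall ai, om ai + kap + \sum_a \sum_ah eta a ah * u ai ah = 0) /\
    (- E + tau + \sum_a \sum_ah eta a ah * D a ah = 0) /\
    (forall a, sig a - \sum_ah eta a ah = 0) /\
    perp tau lam /\
    (forall ai, perp (om ai) (pbar ai)) /\
    (forall a ah, perp (eta a ah) (- xi a + payoff pbar ah + lam * D a ah)).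

Definition saddle_certificate c0 g xi lam : Prop :=
  [/\ is_plan g, plan_cost g <= E, forall ai, plan_value (u ai) g <= c0,
      dual_feasible (payoff pbar) xi lam & c0 <= dual_value xi lam].

Lemma duality_gap_split c0 g xi lam :
  \sum_ai pbar ai = 1 -> (forall a, \sum_ah g a ah = sig a) ->
  c0 - dual_value xi lam =
    \sum_a \sum_ah g a ah * (- xi a + payoff pbar ah + lam * D a ah)
    + \sum_ai (c0 - plan_value (u ai) g) * pbar ai + (E - plan_cost g) * lam.
Proof.
move=> pbar1 g_rows.
have -> : \sum_a \sum_ah g a ah * (- xi a + payoff pbar ah + lam * D a ah) =
    - \sum_a sig a * xi a + plan_value (payoff pbar) g + lam * plan_cost g.
  rewrite /plan_value /plan_cost mulr_sumr -sumrN -!big_split.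
  apply: eq_bigr => a _ /=; rewrite -g_rows mulr_suml mulr_sumr -sumrN -!big_split.
  by apply: eq_bigr => ah _ /=; ring.
have -> : \sum_ai (c0 - plan_value (u ai) g) * pbar ai =
          c0 - plan_value (payoff pbar) g.
  under eq_bigr => ai _ do rewrite mulrBl.
  rewrite sumrB -mulr_sumr pbar1 mulr1 plan_value_payoff.
  by congr (_ - _); apply: eq_bigr => ai _; rewrite mulrC.
by rewrite /dual_value; ring.
Qed.

Hypothesis pbar_prob : is_prob pbar.

Lemma robust_kkt_certificate : robust_kkt ->
  exists c0 g xi lam, saddle_certificate c0 g xi lam.
Proof.
move=> [lam [xi [tau [om [kap [eta [h_u [h_cost [h_rows [h_lam [h_om h_eta]]]]]]]]]]].
have [tau_ge0 lam_ge0 tau_lam] := h_lam.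
have eta_rows a : \sum_ah eta a ah = sig a.
  by apply/esym/eqP; rewrite -subr_eq0 h_rows.
have cost : E - plan_cost eta = tau by move: h_cost; rewrite /plan_cost; lra.
have value ai : - kap - plan_value (u ai) eta = om ai.
  by move: (h_u ai); rewrite /plan_value; lra.
exists (- kap), eta, xi, lam; split.
- by split=> [a ah|//]; case: (h_eta a ah).
- by move: cost; lra.
- by move=> ai; case: (h_om ai) => om_ge0 _ _; move: (value ai); lra.
- by split=> // a ah; case: (h_eta a ah) => _ slack_ge0 _; lra.
rewrite -subr_le0 (duality_gap_split _ _ _ _ pbar_prob.2 eta_rows) cost tau_lam addr0.
rewrite big1 ?add0r => [|a _]; last by rewrite big1 // => ah _; case: (h_eta a ah).
by rewrite big1 // => ai _; rewrite value; case: (h_om ai).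
Qed.

Lemma certificate_robust_kkt c0 g xi lam :
  saddle_certificate c0 g xi lam -> robust_kkt.
Proof.
move=> [[g_ge0 g_rows] g_cost g_val [lam_ge0 xi_le] c0_le].
have [pbar_ge0 pbar1] := pbar_prob.
pose slack a ah := - xi a + payoff pbar ah + lam * D a ah.
have slack_ge0 a ah : 0 <= slack a ah by have := xi_le a ah; rewrite /slack; lra.
have om_ge0 ai : 0 <= c0 - plan_value (u ai) g by rewrite subr_ge0.
have tau_ge0 : 0 <= E - plan_cost g by rewrite subr_ge0.
have := duality_gap_split c0 g xi lam pbar1 g_rows.
have : 0 <= \sum_a \sum_ah g a ah * slack a ah.
  by do 2!(apply: sumr_ge0 => ? _); rewrite mulr_ge0.
have : 0 <= \sum_ai (c0 - plan_value (u ai) g) * pbar ai.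
  by apply: sumr_ge0 => ai _; rewrite mulr_ge0.
have : 0 <= (E - plan_cost g) * lam by rewrite mulr_ge0.
move=> tau_lam_ge0 om_sum_ge0 slack_sum_ge0 gap.
have slack_sum0 : \sum_a \sum_ah g a ah * slack a ah = 0 by lra.
have om_sum0 : \sum_ai (c0 - plan_value (u ai) g) * pbar ai = 0 by lra.
have slack0 a : \sum_ah g a ah * slack a ah = 0.
  apply: (psumr_eq0P _ slack_sum0) => // a' _.
  by apply: sumr_ge0 => ah _; rewrite mulr_ge0.
exists lam, xi, (E - plan_cost g), (fun ai => c0 - plan_value (u ai) g), (- c0), g.
split; first by move=> ai; rewrite /plan_value; ring.
split; first by rewrite /plan_cost; ring.
split; first by move=> a; rewrite g_rows subrr.
split; first by split=> //; lra.
split=> [ai|a ah]; split=> //.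
- by apply: (psumr_eq0P _ om_sum0) => // ai' _; rewrite mulr_ge0.
- exact: slack_ge0.
- rewrite -/(slack a ah); apply: (psumr_eq0P _ (slack0 a)) => // ah' _.
  by rewrite mulr_ge0.
Qed.

Lemma robust_kkt_saddle :
  robust_kkt <-> exists c0 g xi lam, saddle_certificate c0 g xi lam.
Proof.
split=> [|[c0 [g [xi [lam]]]]]; first exact: robust_kkt_certificate.
exact: certificate_robust_kkt.
Qed.

End SaddleCertificate.

End TransportPlans.

Arguments plan_weak_duality {R P D sig V g xi lam}.

Lemma prod_dist_prob {R : realType} {N : nat} {A : 'I_N -> finType}
    {p : forall j, A j -> R} :
  (forall j, is_prob (p j)) -> forall i, is_prob (prod_dist p i).
Proof.
move=> p_prob i; split=> [a|].
  by apply: prodr_ge0 => j _; case: (p_prob (sval j)).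
rewrite /prod_dist -(@bigA_distr_dffun _ _ (fun j : others i => A (sval j))
  (fun j : others i => p (sval j))).
by rewrite big1 // => j _; case: (p_prob (sval j)).
Qed.

Section RobustBestResponse.
Context {R : realType} {S P : finType}.
Variables (u : S -> P -> R) (d : P -> P -> R) (s eps : R) (sig : P -> R).
Hypotheses (s_gt0 : 0 < s) (eps_ge0 : 0 <= eps) (d_refl : forall a, d a a = 0).
Hypothesis sig_prob : is_prob sig.

Local Notation D := (fun a ah => d a ah `^ s).
Local Notation E := (eps `^ s).

(* [Wass d s mu nu] is by definition [inf (coupling_costs mu nu) `^ s^-1]. *)
Definition coupling_costs (mu nu : P -> R) : set R :=
  [set c | exists g, coupling mu nu g /\ c = \sum_x \sum_y (d x y) `^ s * g x y].

Lemma coupling_cost_plan g : \sum_x \sum_y (d x y) `^ s * g x y = plan_cost D g.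
Proof. by apply: eq_bigr => x _; apply: eq_bigr => y _; rewrite mulrC. Qed.

Lemma coupling_costs_ge0 mu nu c : coupling_costs mu nu c -> 0 <= c.
Proof.
move=> [g [[g_ge0 _ _] ->]].
by do 2!(apply: sumr_ge0 => ? _); rewrite mulr_ge0 ?powR_ge0.
Qed.

Lemma coupling_costs_neq0 mu nu :
  is_prob mu -> is_prob nu -> coupling_costs mu nu !=set0.
Proof.
move=> [mu_ge0 mu1] [nu_ge0 nu1].
exists (\sum_x \sum_y (d x y) `^ s * (mu x * nu y)), (fun x y => mu x * nu y).
split=> //; split=> [x y|x|y]; first exact: mulr_ge0.
  by rewrite -mulr_sumr nu1 mulr1.
by rewrite -mulr_suml mu1 mul1r.
Qed.

Lemma Wass_le nu : is_prob nu ->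
  (Wass d s sig nu <= eps) = (inf (coupling_costs sig nu) <= E).
Proof.
move=> nu_prob; apply: powRV_le => //.
by apply: lb_le_inf; [exact: coupling_costs_neq0 | exact: coupling_costs_ge0].
Qed.

Lemma ambiguity_target g : is_plan sig g -> plan_cost D g <= E ->
  ambiguity d s eps sig (target g).
Proof.
move=> [g_ge0 g_rows] g_cost.
have q_prob : is_prob (target g).
  split=> [ah|]; first exact: sumr_ge0.
  rewrite /target exchange_big /=; under eq_bigr do rewrite g_rows.
  exact: sig_prob.2.
split=> //; rewrite Wass_le //; apply: le_trans g_cost.
apply: ge_inf; first by exists 0 => c /coupling_costs_ge0.
by exists g; split; rewrite ?coupling_cost_plan.
Qed.

Lemma diagonal_plan : exists2 g, is_plan sig g & plan_cost D g <= E.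
Proof.
exists (fun a ah => (ah == a)%:R * sig a).
  by split=> [a ah|a]; rewrite ?sum_delta_l // mulr_ge0 ?ler0n ?sig_prob.1.
rewrite /plan_cost big1 ?powR_ge0 // => a _.
under eq_bigr => ah _ do rewrite -mulrA.
by rewrite sum_delta_l d_refl powR0 ?mulr0 // gt_eqF.
Qed.

Lemma UpayE p q : Upay u p q = \sum_ah q ah * payoff u p ah.
Proof.
rewrite /Upay exchange_big; apply: eq_bigr => ah _; rewrite mulr_sumr.
by apply: eq_bigr => ai _; ring.
Qed.

Lemma Upay_plan p g q : (forall ah, \sum_a g a ah = q ah) ->
  Upay u p q = plan_value (payoff u p) g.
Proof.
move=> g_cols; rewrite UpayE /plan_value exchange_big; apply: eq_bigr => ah _.
by rewrite -g_cols mulr_suml.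
Qed.

Lemma Upay_lbound p q : is_prob q -> - \sum_ah `|payoff u p ah| <= Upay u p q.
Proof.
move=> [q_ge0 q1]; rewrite UpayE -sumrN; apply: ler_sum => ah _.
have q_le1 : q ah <= 1 by rewrite -q1 (bigD1 ah) //= lerDl sumr_ge0.
by apply: lerNnormlW; rewrite normrM ger0_norm // ler_piMl.
Qed.

Lemma robust_value_le p q : ambiguity d s eps sig q ->
  robust_value u d s eps p sig <= Upay u p q.
Proof.
move=> q_amb; apply: ge_inf; last by exists q.
by exists (- \sum_ah `|payoff u p ah|) => _ [q' [q'_prob _] <-]; exact: Upay_lbound.
Qed.

Lemma robust_value_ge p B : (forall q, ambiguity d s eps sig q -> B <= Upay u p q) ->
  B <= robust_value u d s eps p sig.
Proof.
move=> le_B; apply: lb_le_inf => [|_ [q q_amb <-]]; last exact: le_B.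
have [g g_plan g_cost] := diagonal_plan.
by exists (Upay u p (target g)), (target g) => //; exact: ambiguity_target.
Qed.

Lemma dual_value_le_robust_value {p xi lam} :
  dual_feasible D (payoff u p) xi lam ->
  dual_value E sig xi lam <= robust_value u d s eps p sig.
Proof.
move=> dual; apply: robust_value_ge => q [q_prob W_le].
have cost_le : inf (coupling_costs sig q) <= E by rewrite -Wass_le.
suff : \sum_a sig a * xi a - Upay u p q <= lam * inf (coupling_costs sig q).
  by have := ler_wpM2l dual.1 cost_le; rewrite /dual_value; lra.
apply: le_mul_inf dual.1 _ => [|_ [g [[g_ge0 g_rows g_cols] ->]]].
  exact: coupling_costs_neq0.
rewrite (Upay_plan _ _ _ g_cols) coupling_cost_plan.
by have := plan_weak_duality (conj g_ge0 g_rows) dual; lra.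
Qed.

Lemma saddle_certificate_best_response pbar c0 g xi lam :
  saddle_certificate u D E sig pbar c0 g xi lam ->
  forall p, is_prob p ->
    robust_value u d s eps p sig <= robust_value u d s eps pbar sig.
Proof.
move=> [g_plan g_cost g_val dual c0_le] p [p_ge0 p1].
apply: (le_trans _ (dual_value_le_robust_value dual)); apply: (le_trans _ c0_le).
apply: (le_trans (robust_value_le p _ (ambiguity_target _ g_plan g_cost))).
rewrite (Upay_plan _ _ _ (fun _ => erefl)) plan_value_payoff -[c0]mul1r -p1 mulr_suml.
by apply: ler_sum => ai _; rewrite ler_wpM2l.
Qed.

Lemma best_response_saddle_certificate pbar :
  (forall p, is_prob p ->
     robust_value u d s eps p sig <= robust_value u d s eps pbar sig) ->
  exists c0 g xi lam, saddle_certificate u D E sig pbar c0 g xi lam.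
Proof.
move=> best; set c0 := robust_value u d s eps pbar sig.
have [[g [g_plan g_cost g_val]]|[p [xi [lam [p_prob dual c0_lt]]]]] :=
  plan_or_dual u D E sig c0 diagonal_plan; last first.
  by have := lt_le_trans c0_lt (dual_value_le_robust_value dual); rewrite ltNge best.
have [|xi [lam [dual c0_le]]] := transport_strong_duality D E sig (payoff u pbar) c0.
  move=> g' g'_plan g'_cost; rewrite -(Upay_plan _ _ _ (fun _ => erefl)).
  exact/robust_value_le/ambiguity_target.
by exists c0, g, xi, lam.
Qed.

Lemma robust_best_response_saddle pbar :
  (forall p, is_prob p ->
     robust_value u d s eps p sig <= robust_value u d s eps pbar sig) <->
  exists c0 g xi lam, saddle_certificate u D E sig pbar c0 g xi lam.
Proof.
split=> [|[c0 [g [xi [lam]]]]]; first exact: best_response_saddle_certificate.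
exact: saddle_certificate_best_response.
Qed.

End RobustBestResponse.

Theorem proposition2 (R : realType) (N : nat) (A : 'I_N -> finType)
  (u : forall i, A i -> profm A i -> R)
  (d : forall i, profm A i -> profm A i -> R)
  (eps s : R) (pbar : forall i, A i -> R) :
  0 <= eps -> 1 <= s ->
  (forall i, is_metric (d i)) ->
  (forall i, is_prob (pbar i)) ->
  SRE u d s eps pbar <->
  (forall i : 'I_N,
     exists (lam : R) (xi : profm A i -> R) (tau : R) (om : A i -> R) (kap : R)
            (eta : profm A i -> profm A i -> R),
       (forall ai : A i,
              om ai + kap + \sum_(a : profm A i) \sum_(ah : profm A i)
                             eta a ah * u i ai ah = 0) /\
           (- (eps `^ s) + tau + \sum_(a : profm A i) \sum_(ah : profm A i)
                             eta a ah * (d i a ah) `^ s = 0) /\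
           (forall a : profm A i,
              prod_dist pbar i a - \sum_(ah : profm A i) eta a ah = 0) /\
           perp tau lam /\
           (forall ai : A i, perp (om ai) (pbar i ai)) /\
         (forall a ah : profm A i,
              perp (eta a ah)
                (- xi a + \sum_(ai : A i) u i ai ah * pbar i ai
                 + lam * (d i a ah) `^ s))).
Proof.
move=> eps_ge0 s_ge1 d_metric pbar_prob.
have s_gt0 : 0 < s by apply: lt_le_trans s_ge1.
have d_refl i a : d i a a = 0 by case: (d_metric i) => _ /(_ a a) [_ ->].
have sig_prob := prod_dist_prob pbar_prob.
have best_saddle i := robust_best_response_saddle (u i) _ _ _ _ s_gt0 eps_ge0
  (d_refl i) (sig_prob i) (pbar i).
have kkt_saddle i := robust_kkt_saddle (u i) (fun a ah => d i a ah `^ s) (eps `^ s)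
  (prod_dist pbar i) _ (pbar_prob i).
split=> [sre i | kkt i].
  by apply: (proj2 (kkt_saddle i)); apply/(best_saddle i); case: (sre i).
by split=> //; apply/(best_saddle i)/(proj1 (kkt_saddle i)); exact: kkt.
Qed.
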